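(* There is an absolute constant $c>0$ such that the following holds. Let $\mathcal{J}$ be an input set for Machine Covering on $m$ machines that is proper of degree $d$, with $n$ divisible by $8$, arriving in uniformly random order, and run the procedure $A_d$ on it. Then, with probability at least $c$, every large job is scheduled onto a large machine.
   Context: Machine Covering: $n$ jobs with non-negative sizes assigned to $m$ identical parallel machines, maximizing the minimum load; $\mathrm{OPT}(\mathcal{J})$ is the optimal offline minimum load. $P_i$ is the $i$-th largest job size. A job is large if its size exceeds $\frac{\mathrm{OPT}(\mathcal{J})}{100\sqrt[4]{m}}$, small otherwise; $k$ is the number of large jobs. $\mathcal{J}$ is simple if $n<m$, or $k\ge m$, or $k\le m-\frac{m^{3/4}}{50}$; otherwise it is proper of degree $d:=\lceil\log_2(m-k)\rceil$. Procedure $A_d$ (online, knows $n$): designate $2^d$ machines as small machines and the other $m-2^d$ as large machines. Sampling phase: each of the first $n/8$ arriving jobs is assigned to a least loaded large machine; then let $P^{\uparrow}$ be the $\left(\frac{m-2^d}{8}-\frac{\sqrt m}{2}\right)$-th largest size among these $n/8$ jobs. Partition phase: set $\tau=0$; for each subsequent job of size $p$: if $p\ge P^\uparrow$, assign it to a least loaded large machine; otherwise, if $p>\tau$, set $\tau:=p$ with probability $\frac{1}{9\cdot 2^d\sqrt m}$ (independent coin); then if $p\le\tau$ assign the job to a least loaded small machine, else to a least loaded large machine. *)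

From HB Require Import structures.
From mathcomp Require Import all_boot all_order all_algebra all_fingroup.
From mathcomp Require Import Rstruct.
From Stdlib Require Rdefinitions.

Set Implicit Arguments.
Unset Strict Implicit.
Unset Printing Implicit Defensive.

Import Order.TTheory GRing.Theory Num.Theory.
Local Open Scope ring_scope.

Notation R := Rdefinitions.R.

Section MachineCovering.

Variables (m n : nat) (p : 'I_n -> R).

Definition load (f : {ffun 'I_n -> 'I_m}) (i : 'I_m) : R :=
  \sum_(j | f j == i) p j.

(* minimum load of the assignment f (the neutral element \sum_j p j is an
   upper bound of every load, so this is the genuine minimum when m >= 1) *)
Definition min_load (f : {ffun 'I_n -> 'I_m}) : R :=
  \big[Num.min/(\sum_j p j)]_(i < m) load f i.

(* OPT(J): maximum over all assignments of the minimum load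
   (all min loads are >= 0 for non-negative sizes) *)
Definition OPT : R := \big[Num.max/0]_(f : {ffun 'I_n -> 'I_m}) min_load f.

Definition fourth_root (x : R) : R := Num.sqrt (Num.sqrt x).

Definition is_large (j : 'I_n) : bool :=
  OPT / (100 * fourth_root m%:R) < p j.

Definition num_large : nat := #|[set j | is_large j]|.

Definition pow34 (x : R) : R := Num.sqrt x * fourth_root x.

Definition simple_input : bool :=
  [|| (n < m)%N, (m <= num_large)%N
    | num_large%:R <= m%:R - pow34 m%:R / 50].

Definition proper_input : bool := ~~ simple_input.

(* degree d = ceil(log2(m - k)) : the least e with m - k <= 2^e *)
Definition degree : nat := up_log 2 (m - num_large).

Definition small_machine (d : nat) (i : 'I_m) : bool := (i < 2 ^ d)%N.
Definition large_machine (d : nat) (i : 'I_m) : bool := (2 ^ d <= i)%N.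

(* a least loaded machine among those satisfying cls (None if there is none);
   ties are broken by the deterministic choice of [arg min] *)
Definition least_loaded (loads : {ffun 'I_m -> R}) (cls : pred 'I_m)
  : option 'I_m :=
  if [pick i | cls i] is Some i0 then
    Some [arg min_(i < i0 | cls i) loads i]%O
  else None.

Record state := State {
  st_loads : {ffun 'I_m -> R};
  st_tau : R;
  st_sched : {ffun 'I_n -> option 'I_m} }.

Definition assign (s : state) (j : 'I_n) (cls : pred 'I_m) : state :=
  match least_loaded (st_loads s) cls with
  | Some i =>
      State [ffun i' => st_loads s i' + (if i' == i then p j else 0)]
            (st_tau s)
            [ffun j' => if j' == j then Some i else st_sched s j']
  | None => s
  end.

(* rank (1-based, real valued) of the sampled threshold:
   (m - 2^d)/8 - sqrt(m)/2 ; a non-integral rank is rounded up *)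
Definition threshold_rank (d : nat) : R :=
  ((m - 2 ^ d)%N)%:R / 8 - Num.sqrt m%:R / 2.

(* P^up : the ceil(threshold_rank d)-th largest size among the first n/8
   arriving jobs; sigma t is the job arriving at time t *)
Definition P_up (d : nat) (sigma : {perm 'I_n}) : R :=
  let sample := [seq p (sigma t) | t <- [seq t <- enum 'I_n | (val t < n %/ 8)%N]] in
  nth 0 (sort (fun x y => y <= x) sample)
        `|Num.ceil (threshold_rank d) - 1|%N.

Definition coin_prob (d : nat) : R := 1 / ((9 * 2 ^ d)%N%:R * Num.sqrt m%:R).

Definition step (d : nat) (sigma : {perm 'I_n}) (coins : {ffun 'I_n -> bool})
  (s : state) (t : 'I_n) : state :=
  let j := sigma t in
  let x := p j in
  if (t < n %/ 8)%N then assign s j (large_machine d)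
  else if P_up d sigma <= x then assign s j (large_machine d)
  else
    let tau' := if (st_tau s < x) && coins t then x else st_tau s in
    let s' := State (st_loads s) tau' (st_sched s) in
    if x <= tau' then assign s' j (small_machine d)
    else assign s' j (large_machine d).

Definition init_state : state := State [ffun=> 0] 0 [ffun=> None].

Definition run_A (d : nat) (sigma : {perm 'I_n}) (coins : {ffun 'I_n -> bool})
  : state :=
  foldl (step d sigma coins) init_state (enum 'I_n).

Definition outcome := ({perm 'I_n} * {ffun 'I_n -> bool})%type.

Definition weight (d : nat) (w : outcome) : R :=
  (n`!)%:R^-1 *
  \prod_(t : 'I_n) (if w.2 t then coin_prob d else 1 - coin_prob d).

Definition Pr (d : nat) (E : pred outcome) : R :=
  \sum_(w : outcome | E w) weight d w.

Definition large_jobs_on_large_machines (d : nat) (w : outcome) : bool :=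
  [forall j : 'I_n, is_large j ==>
     match st_sched (run_A d w.1 w.2) j with
     | Some i => large_machine d i
     | None => false
     end].

End MachineCovering.

(* A large job is sent to a small machine only if the threshold tau has reached
   its size.  Since tau only moves to the size of a job below P^up whose coin
   comes up heads, and small jobs are smaller than large ones, this cannot happen
   if all coins are tails at the "risky" times, when a large job below P^up
   arrives after the sampling phase; for a fixed order this has probability
   (1 - q)^#risky.  Let T be the K - s largest large jobs, s = floor(8 2^d sqrt m).
   If fewer than r of them (r the rank defining P^up) fall into the sample, P^up
   is at most the size of every job of T, hence at most s large jobs are risky
   and (1 - q)^#risky >= 1 - s q >= 1/9.  The number of jobs of T in the sample
   is hypergeometric with mean #|T|/8 and variance at most #|T|/8, and properness
   gives r - #|T|/8 >= sqrt m / 2 - 1/8, so by Chebyshev at least 2/5 of the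
   orders are good: the probability is at least 2/45 >= 1/25. *)

From HB Require Import structures.
From mathcomp Require Import all_boot all_order all_algebra all_fingroup.
From mathcomp Require Import Rstruct.
From mathcomp Require Import zify ring lra.
Import Order.TTheory GRing.Theory Num.Theory.
Local Open Scope ring_scope.

Set Implicit Arguments.
Unset Strict Implicit.
Unset Printing Implicit Defensive.

(** * Runs of A_d with tails at every risky time *)

Section Assign.
Variables (m n : nat) (p : 'I_n -> R).

Definition placed_in (cls : pred 'I_m) (o : option 'I_m) : bool :=
  if o is Some i then cls i else false.

Lemma least_loaded_in (loads : {ffun 'I_m -> R}) (cls : pred 'I_m) i :
  least_loaded loads cls = Some i -> cls i.
Proof.
rewrite /least_loaded; case: pickP => // i0 cls_i0 [<-].
by case: (arg_minP loads cls_i0).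
Qed.

Lemma least_loaded_exists (loads : {ffun 'I_m -> R}) (cls : pred 'I_m) i0 :
  cls i0 -> exists i, least_loaded loads cls = Some i.
Proof.
rewrite /least_loaded; case: pickP => [i _ _ | no_cls]; first by eexists.
by rewrite no_cls.
Qed.

Lemma assign_tau (s : state m n) j cls : st_tau (assign p s j cls) = st_tau s.
Proof. by rewrite /assign; case: least_loaded. Qed.

Lemma assign_sched_other (s : state m n) j cls j' : j' != j ->
  st_sched (assign p s j cls) j' = st_sched s j'.
Proof.
by move=> j'_neq; rewrite /assign; case: least_loaded => //= i; rewrite ffunE (negbTE j'_neq).
Qed.

Lemma assign_sched_self (s : state m n) j (cls : pred 'I_m) i0 : cls i0 ->
  placed_in cls (st_sched (assign p s j cls) j).
Proof.
move=> /(least_loaded_exists (st_loads s)) [i ll_i].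
by rewrite /assign ll_i /= ffunE eqxx; apply: least_loaded_in ll_i.
Qed.

End Assign.

Section RunA.
Variables (m n : nat) (p : 'I_n -> R) (d : nat).
Variables (sigma : {perm 'I_n}) (coins : {ffun 'I_n -> bool}).
Local Notation large := (is_large m p).

Definition risky_times : {set 'I_n} :=
  [set t : 'I_n | [&& (n %/ 8 <= t)%N, large (sigma t) & p (sigma t) < P_up m p d sigma]].

Hypothesis large_gt_small : forall j j', large j -> ~~ large j' -> p j' < p j.
Hypothesis large_gt0 : forall j, large j -> 0 < p j.
Hypothesis tails_on_risky : [forall t in risky_times, ~~ coins t].
Variable i0 : 'I_m.
Hypothesis large_i0 : large_machine d i0.

Definition run_invariant (s : state m n) (js : seq 'I_n) :=
  (forall j, large j -> st_tau s < p j) /\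
  {in js, forall j, large j -> placed_in (large_machine d) (st_sched s j)}.

Lemma run_invariant_assign (s : state m n) js j cls :
  run_invariant s js -> (large j -> cls = large_machine d) ->
  run_invariant (assign p s j cls) (rcons js j).
Proof.
move=> [tau_lt placed] cls_large; split=> [j' /tau_lt|j']; first by rewrite assign_tau.
rewrite mem_rcons inE; have [-> _ /cls_large cls_eq | j'_neq /= j'_in] := eqVneq j' j.
  by rewrite cls_eq; apply: assign_sched_self large_i0.
by rewrite assign_sched_other //; apply: placed.
Qed.

Lemma run_invariant_step s js t : run_invariant s js ->
  run_invariant (step p d sigma coins s t) (rcons js (sigma t)).
Proof.
move=> inv; rewrite /step.
case: ifP => [_|sampled]; first exact: run_invariant_assign.
case: ifP => [_|not_above]; first exact: run_invariant_assign.
set x := p (sigma t); set tau' := if _ then x else _.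
have tau'_lt : forall j, large j -> tau' < p j.
  move=> j large_j; rewrite /tau'; case: ifP => [/andP[_ heads]|_]; last exact: inv.1.
  have [large_t|] := boolP (large (sigma t)); last exact: large_gt_small.
  have /forallP/(_ t) := tails_on_risky.
  by rewrite inE leqNgt sampled large_t ltNge not_above heads.
have inv' : run_invariant (State (st_loads s) tau' (st_sched s)) js by split; [|exact: inv.2].
case: ifP => [x_le|_]; last exact: run_invariant_assign.
apply: run_invariant_assign => // /tau'_lt.
by rewrite ltNge x_le.
Qed.

Lemma run_invariant_foldl ts s js : run_invariant s js ->
  run_invariant (foldl (step p d sigma coins) s ts) (js ++ map sigma ts).
Proof.
elim: ts s js => [|t ts IH] s js inv /=; first by rewrite cats0.
by rewrite -cat_rcons; apply/IH/run_invariant_step.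
Qed.

Lemma run_A_large_placed : large_jobs_on_large_machines m p d (sigma, coins).
Proof.
have init : run_invariant (init_state m n) [::] by split=> // j /large_gt0.
have [_ placed] := run_invariant_foldl (enum 'I_n) init.
apply/forallP => j; apply/implyP; apply: placed.
by rewrite -[j](permKV sigma) map_f ?mem_enum.
Qed.

End RunA.

(** * Coin weights *)

Lemma sum_prod_tails_on (I : finType) (K : comPzRingType) (B : {set I}) (q : K) :
  \sum_(c : {ffun I -> bool} | [forall t in B, ~~ c t])
     \prod_t (if c t then q else 1 - q) = (1 - q) ^+ #|B|.
Proof.
pose F t (b : bool) := if b then (if t \in B then 0 else q) else 1 - q.
transitivity (\sum_(c : {ffun I -> bool}) \prod_t F t (c t)).
  rewrite big_mkcond; apply: eq_bigr => c _.
  have [/forall_inP tails | /forall_inPn [t tB /negPn heads]] := boolP [forall t in B, ~~ c t].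
    by apply: eq_bigr => t _; rewrite /F; case: (boolP (t \in B)) => [/tails/negbTE ->|].
  by rewrite (bigD1 t) //= /F heads tB mul0r.
rewrite -bigA_distr_bigA (bigID [in B]) /=.
rewrite (eq_bigr (fun _ => 1 - q)); last by move=> t tB; rewrite big_bool /F tB /= add0r.
rewrite prodr_const big1 ?mulr1 // => t /negbTE tB.
by rewrite big_bool /F tB /= subrKC.
Qed.

Lemma weight_ge0 m n d (w : outcome n) : 0 <= coin_prob m d <= 1 -> 0 <= weight m d w.
Proof.
case/andP=> q_ge0 q_le1; rewrite mulr_ge0 ?invr_ge0 ?ler0n //.
by apply: prodr_ge0 => t _; case: (w.2 t); rewrite ?subr_ge0.
Qed.

Lemma Pr_ge_tails_on m n d (E : pred (outcome n)) (B : {perm 'I_n} -> {set 'I_n}) :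
  0 <= coin_prob m d <= 1 ->
  (forall sigma (coins : {ffun 'I_n -> bool}),
     [forall t in B sigma, ~~ coins t] -> E (sigma, coins)) ->
  (n`!)%:R^-1 * \sum_sigma (1 - coin_prob m d) ^+ #|B sigma| <= Pr m d E.
Proof.
move=> q01 tails_E.
have -> : (n`!)%:R^-1 * \sum_sigma (1 - coin_prob m d) ^+ #|B sigma| =
    \sum_(w : outcome n | [forall t in B w.1, ~~ w.2 t]) weight m d w.
  rewrite mulr_sumr (eq_bigr (fun sigma =>
    \sum_(c : {ffun 'I_n -> bool} | [forall t in B sigma, ~~ c t])
       weight m d (sigma, c))).
    by rewrite pair_big_dep.
  by move=> sigma _; rewrite -sum_prod_tails_on mulr_sumr.
rewrite /Pr [leLHS]big_mkcond [leRHS]big_mkcond; apply: ler_sum => -[sigma coins] _ /=.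
case: ifP => [/tails_E -> // | _]; by case: ifP; rewrite ?weight_ge0.
Qed.

(** * Hits of a uniformly random permutation *)

Lemma sum_eq_indicator (T : finType) (A : {set T}) (x : T) :
  \sum_(u in A) (x == u)%:R = (x \in A)%:R :> R.
Proof.
have [xA | xA] := boolP (x \in A).
  rewrite (bigD1 x) //= eqxx big1 ?addr0 // => u /andP[_].
  by rewrite eq_sym => /negbTE ->.
by rewrite big1 // => u uA; case: eqP => // xu; rewrite xu uA in xA.
Qed.

Lemma sumr_const_D1 (T : finType) (A : {set T}) (a : T) (x : R) : a \in A ->
  \sum_(i in A | i != a) x = (#|A|%:R - 1) * x.
Proof.
move=> aA; rewrite sumr_const [in RHS](cardD1 a A) aA add1n -natr1 addrK mulr_natl.
by congr (_ *+ _); apply: eq_card => i; rewrite !inE andbC.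
Qed.

Lemma falling2_div_le_sqr (a b n : R) : 1 < n -> 0 <= a <= n -> 0 <= b ->
  0 <= a * (a - 1) -> 0 <= b * (b - 1) ->
  a * (a - 1) * (b * (b - 1)) / (n * (n - 1)) <= (a * b / n) ^+ 2.
Proof.
move=> n_gt1 /andP[a_ge0 a_le_n] b_ge0 a2_ge0 b2_ge0.
have n_gt0 : 0 < n by lra.
rewrite ler_pdivrMr ?mulr_gt0 ?subr_gt0 // expr_div_n.
rewrite (_ : _ / _ * _ = (a * b) ^+ 2 * (n - 1) / n); last by field; rewrite gt_eqF.
rewrite ler_pdivlMr //.
have a_term : a * (a - 1) * n <= a ^+ 2 * (n - 1) by nra.
have b_term : b * (b - 1) <= b ^+ 2 by nra.
have a2n_ge0 : 0 <= a ^+ 2 * (n - 1) by nra.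
apply: le_trans (_ : a ^+ 2 * (n - 1) * (b * (b - 1)) <= _).
  by rewrite mulrAC; apply: ler_wpM2r.
have := ler_wpM2l a2n_ge0 b_term; rewrite exprMn; lra.
Qed.

Lemma natr_falling2_ge0 (k : nat) : 0 <= k%:R * (k%:R - 1) :> R.
Proof. by case: k => [|k]; rewrite ?mul0r // -natr1 addrK; have := ler0n R k; nra. Qed.

Section PermutationMoments.
Variable I : finType.
Hypothesis card_I_gt1 : (1 < #|I|)%N.

Local Notation nI := (#|I|%:R : R).
Local Notation nP := (#|{perm I}|%:R : R).

Lemma sum_perm_eq_const (t u u' : I) :
  \sum_(s : {perm I}) (s t == u)%:R = \sum_(s : {perm I}) (s t == u')%:R :> R.
Proof.
rewrite (reindex_inj (mulIg (tperm u u'))); apply: eq_bigr => s _.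
by rewrite permM (canF_eq (tpermK u u')) tpermL.
Qed.

Lemma sum_perm_eq (t u : I) : \sum_(s : {perm I}) (s t == u)%:R = nP / nI.
Proof.
have nI_neq0 : nI != 0 by rewrite pnatr_eq0 -lt0n (ltnW card_I_gt1).
transitivity ((\sum_(u' in [set: I]) \sum_(s : {perm I}) (s t == u')%:R) / nI).
  rewrite (eq_bigr _ (fun u' _ => sum_perm_eq_const t u' u)) sumr_const cardsT.
  by rewrite -[_ *+ #|I|]mulr_natr mulfK.
rewrite exchange_big /= (eq_bigr (fun _ => 1)) ?sumr_const // => s _.
by rewrite sum_eq_indicator in_setT.
Qed.

Lemma sum_perm_eq2_const (t t' u w w' : I) : u != w -> u != w' ->
  \sum_(s : {perm I}) ((s t == u) && (s t' == w))%:R =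
  \sum_(s : {perm I}) ((s t == u) && (s t' == w'))%:R :> R.
Proof.
move=> uw uw'; rewrite (reindex_inj (mulIg (tperm w w'))); apply: eq_bigr => s _.
by rewrite !permM !(canF_eq (tpermK w w')) tpermL tpermD // eq_sym.
Qed.

Lemma sum_perm_eq2 (t t' u w : I) : t != t' -> u != w ->
  \sum_(s : {perm I}) ((s t == u) && (s t' == w))%:R = nP / (nI * (nI - 1)).
Proof.
move=> tt' uw.
have nI1_neq0 : nI - 1 != 0 by rewrite subr_eq0 pnatr_eq1 neq_ltn card_I_gt1 orbT.
have : \sum_(w' in [set~ u]) \sum_(s : {perm I}) ((s t == u) && (s t' == w'))%:R
       = nP / nI.
  rewrite exchange_big /= -(sum_perm_eq t u); apply: eq_bigr => s _.
  case: eqP => [<-|_] /=; last by rewrite big1.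
  by rewrite sum_eq_indicator !inE (inj_eq perm_inj) eq_sym tt'.
rewrite (eq_bigr (fun _ => \sum_(s : {perm I}) ((s t == u) && (s t' == w))%:R)).
  set c2 := \sum_(s : {perm I}) _; rewrite sumr_const cardsC1 => sum_c2.
  apply: (mulIf nI1_neq0); rewrite invfM mulrA mulfVK // -sum_c2.
  by rewrite -(mulr_natr c2) -subn1 natrB // ltnW.
by move=> w'; rewrite !inE eq_sym => uw'; apply: sum_perm_eq2_const.
Qed.

Lemma sum_perm_in (T : {set I}) (t : I) :
  \sum_(s : {perm I}) (s t \in T)%:R = #|T|%:R * (nP / nI).
Proof.
rewrite (eq_bigr (fun s : {perm I} => \sum_(u in T) (s t == u)%:R)); last first.
  by move=> s _; rewrite sum_eq_indicator.
rewrite exchange_big /= (eq_bigr _ (fun u _ => sum_perm_eq t u)) sumr_const.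
by rewrite [RHS]mulr_natl.
Qed.

Lemma sum_perm_in2 (T : {set I}) (t t' : I) : t != t' ->
  \sum_(s : {perm I}) ((s t \in T) && (s t' \in T))%:R =
  #|T|%:R * (#|T|%:R - 1) * (nP / (nI * (nI - 1))).
Proof.
move=> tt'.
have indicator2 (x y : I) : ((x \in T) && (y \in T))%:R =
    \sum_(u in T) \sum_(w in T) ((x == u) && (y == w))%:R :> R.
  rewrite -mulnb natrM -!sum_eq_indicator mulr_suml; apply: eq_bigr => u _.
  by rewrite mulr_sumr; apply: eq_bigr => w _; rewrite -natrM mulnb.
under eq_bigr do rewrite indicator2.
rewrite exchange_big /= (eq_bigr (fun _ => (#|T|%:R - 1) * (nP / (nI * (nI - 1))))).
  by rewrite sumr_const -[RHS]mulrA [RHS]mulr_natl.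
move=> u uT; rewrite exchange_big /= (bigD1 u) //= big1 ?add0r => [|s _]; last first.
  by case: eqP => //= <-; rewrite (inj_eq perm_inj) eq_sym (negbTE tt').
rewrite (eq_bigr (fun _ => nP / (nI * (nI - 1)))); last first.
  by move=> w /andP[_ wu]; apply: sum_perm_eq2; rewrite // eq_sym.
exact: sumr_const_D1.
Qed.

Definition hits (S T : {set I}) (s : {perm I}) : nat := #|[set t in S | s t \in T]|.

Lemma hitsE (S T : {set I}) (s : {perm I}) :
  (hits S T s)%:R = \sum_(t in S) (s t \in T)%:R :> R.
Proof.
rewrite /hits -sum1_card natr_sum big_mkcond [RHS]big_mkcond /=.
by apply: eq_bigr => t _; rewrite inE; case: (t \in S); case: (s t \in T).
Qed.

Lemma sum_hits (S T : {set I}) :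
  \sum_(s : {perm I}) (hits S T s)%:R = nP * (#|S|%:R * #|T|%:R / nI).
Proof.
rewrite (eq_bigr _ (fun s _ => hitsE S T s)) exchange_big /=.
rewrite (eq_bigr _ (fun t _ => sum_perm_in T t)) sumr_const.
by rewrite -[_ *+ #|S|]mulr_natl; ring.
Qed.

Lemma sum_hits_sqr (S T : {set I}) :
  \sum_(s : {perm I}) (hits S T s)%:R ^+ 2 =
  nP * (#|S|%:R * #|T|%:R / nI +
        #|S|%:R * (#|S|%:R - 1) * (#|T|%:R * (#|T|%:R - 1)) / (nI * (nI - 1))).
Proof.
have hits_sqr (s : {perm I}) : (hits S T s)%:R ^+ 2 =
    \sum_(t in S) \sum_(t' in S) ((s t \in T) && (s t' \in T))%:R :> R.
  rewrite hitsE expr2 mulr_suml; apply: eq_bigr => t _.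
  by rewrite mulr_sumr; apply: eq_bigr => t' _; rewrite -natrM mulnb.
rewrite (eq_bigr _ (fun s _ => hits_sqr s)) exchange_big /=.
rewrite (eq_bigr (fun _ => #|T|%:R * (nP / nI) +
    (#|S|%:R - 1) * (#|T|%:R * (#|T|%:R - 1) * (nP / (nI * (nI - 1)))))).
  by rewrite sumr_const -[_ *+ #|S|]mulr_natl; ring.
move=> t tS; rewrite exchange_big /= (bigD1 t) //=.
under eq_bigr do rewrite andbb.
rewrite sum_perm_in -(sumr_const_D1 _ tS); congr (_ + _); apply: eq_bigr => t' /andP[_ t't].
by apply: sum_perm_in2; rewrite eq_sym.
Qed.

Lemma sum_hits_centered_sqr_le (S T : {set I}) :
  \sum_(s : {perm I}) ((hits S T s)%:R - #|S|%:R * #|T|%:R / nI) ^+ 2 <=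
  nP * (#|S|%:R * #|T|%:R / nI).
Proof.
set mu := _ / nI.
have -> : \sum_(s : {perm I}) ((hits S T s)%:R - mu) ^+ 2 =
    \sum_(s : {perm I}) (hits S T s)%:R ^+ 2 - mu *+ 2 * \sum_(s : {perm I}) (hits S T s)%:R
    + nP * mu ^+ 2.
  have -> : nP * mu ^+ 2 = \sum_(s : {perm I}) mu ^+ 2 by rewrite sumr_const mulr_natl.
  rewrite mulr_sumr -sumrB -big_split /=.
  by apply: eq_bigr => s _; ring.
rewrite sum_hits sum_hits_sqr; set Q := _ / (nI * (nI - 1)).
suff Q_le : Q <= mu ^+ 2.
  by have := ler_wpM2l (ler0n R #|{perm I}|) Q_le; rewrite -/mu; lra.
apply: falling2_div_le_sqr.
- by rewrite ltr1n.
- by rewrite ler0n ler_nat max_card.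
- by rewrite ler0n.
- exact: natr_falling2_ge0.
- exact: natr_falling2_ge0.
Qed.

End PermutationMoments.

(** * Order statistics of the sample *)

Lemma nth_sort_ge_le d (T : orderType d) (s : seq T) (x0 c : T) (i : nat) :
  (x0 <= c)%O -> (count (fun y => c < y)%O s <= i)%N ->
  (nth x0 (sort (fun x y => y <= x)%O s) i <= c)%O.
Proof.
set ge := fun x y : T => (y <= x)%O; move=> x0_le.
rewrite -(count_sort ge); set srt := sort ge s => cnt_le.
have [i_ge | i_lt] := leqP (size srt) i; first by rewrite nth_default.
rewrite leNgt; apply/negP => c_lt.
have ge_trans : transitive ge by move=> x y z /= xy yz; apply: le_trans yz xy.
have srt_sorted : sorted ge srt by apply: sort_sorted => x y; apply: le_total.
have prefix_gt : all (fun y => c < y)%O (take i.+1 srt).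
  apply/(all_nthP x0) => j; rewrite size_takel // => j_le; rewrite nth_take //.
  move: j_le; rewrite ltnS leq_eqVlt => /predU1P[-> // | j_lt].
  apply: lt_le_trans c_lt _.
  by apply: (sorted_ltn_nth ge_trans x0 srt_sorted j i) => //; rewrite inE (ltn_trans j_lt).
move: prefix_gt; rewrite all_count size_takel // => /eqP cnt_prefix.
have : (count (fun y => c < y)%O (take i.+1 srt) <= count (fun y => c < y)%O srt)%N.
  by rewrite -[X in (_ <= count _ X)%N](cat_take_drop i.+1) count_cat leq_addr.
by rewrite cnt_prefix => /leq_trans/(_ cnt_le); rewrite ltnn.
Qed.

Lemma exists_top_subset (I : finType) d (T : orderType d) (p : I -> T) (A : {set I}) k :
  (k <= #|A|)%N -> exists B : {set I},
    [/\ B \subset A, #|B| = k & {in B & A :\: B, forall j j', (p j' <= p j)%O}].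
Proof.
elim: k => [|k IH] k_lt.
  by exists set0; split; rewrite ?sub0set ?cards0 // => j j'; rewrite inE.
have [B [BA cardB B_top]] := IH (ltnW k_lt).
have [j0 j0_in] : exists j0, j0 \in A :\: B.
  by apply/set0Pn; rewrite -card_gt0 cardsD (setIidPr BA) cardB subn_gt0.
have [j_max j_max_in j_max_top] := arg_maxP p j0_in.
exists (j_max |: B); split.
- by rewrite subUset sub1set BA andbT; case/setDP: j_max_in.
- by rewrite cardsU1 cardB; case/setDP: j_max_in => _ ->.
move=> j j'; rewrite !inE negb_or => /predU1P[-> | jB] /andP[/andP[_ j'B] j'A].
  have j'_in : j' \in A :\: B by rewrite inE j'B.
  exact: j_max_top.
by apply: B_top; rewrite // inE j'B.
Qed.

Lemma chebyshev_card (A : finType) (f : A -> R) (mu r : R) : mu <= r ->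
  #|[set x | r <= f x]|%:R * (r - mu) ^+ 2 <= \sum_x (f x - mu) ^+ 2.
Proof.
move=> mu_le; rewrite -sum1_card natr_sum mulr_suml [leRHS]big_mkcond /=.
rewrite big_mkcond /=; apply: ler_sum => x _; rewrite inE.
case: ifP => [r_le | _]; last exact: sqr_ge0.
by rewrite mul1r ler_sqr ?nnegrE ?subr_ge0 ?lerD2r // (le_trans mu_le).
Qed.

Definition sample_times n : {set 'I_n} := [set t : 'I_n | (t < n %/ 8)%N].

Lemma card_ord_lt n k : (k <= n)%N -> #|[set t : 'I_n | (t < k)%N]| = k.
Proof.
move=> k_le; rewrite -sum1_card (eq_bigl (fun t : 'I_n => (t < k)%N)) => [|t]; last by rewrite inE.
by rewrite -(big_ord_widen _ (fun _ => 1%N)) // sum1_card card_ord.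
Qed.

Lemma P_up_le m n (p : 'I_n -> R) d (sigma : {perm 'I_n}) (T : {set 'I_n}) (c : R) :
  0 <= c -> (forall j, j \notin T -> p j <= c) ->
  (hits (sample_times n) T sigma)%:R < threshold_rank m d -> P_up m p d sigma <= c.
Proof.
move=> c_ge0 le_c hits_lt; apply: nth_sort_ge_le => //.
rewrite count_map; apply: (@leq_trans (hits (sample_times n) T sigma)).
  rewrite enumT /hits cardE /enum_mem size_filter count_filter.
  apply: sub_count => t /=; rewrite !inE andbC; case: (_ < _)%N => //=.
  by apply: contraLR => /le_c; rewrite -leNgt.
have hits_lt_ceil : ((hits (sample_times n) T sigma)%:Z < Num.ceil (threshold_rank m d))%R.
  by rewrite ceil_gt_int -pmulrn.
have abs_ceil : ((`|Num.ceil (threshold_rank m d) - 1|%N)%:Z =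
    Num.ceil (threshold_rank m d) - 1)%R by rewrite gez0_abs // subr_ge0; lia.
lia.
Qed.

Lemma bernoulli_ineq (q : R) (k : nat) : 0 <= q <= 1 -> 1 - k%:R * q <= (1 - q) ^+ k.
Proof.
case/andP=> q_ge0 q_le1; elim: k => [|k IH]; first by rewrite mul0r subr0 expr0.
rewrite exprS -natr1; have := ler_wpM2l (_ : 0 <= 1 - q) IH.
by have := ler0n R k; nra.
Qed.

Lemma up_log2_bounds (e : nat) : (0 < e)%N -> (e <= 2 ^ up_log 2 e < e.*2)%N.
Proof.
move=> e_gt0; rewrite up_logP //=; have [e_gt1 | ] := ltnP 1 e; last first.
  by rewrite leq_eqVlt ltnNge e_gt0 orbF => /eqP ->; rewrite up_log1.
rewrite -(prednK (_ : 0 < up_log 2 e)%N) ?up_log_gt0 // expnS -mul2n.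
by rewrite ltn_pmul2l // up_log_gtn.
Qed.

Lemma OPT_ge0 m n (p : 'I_n -> R) : 0 <= OPT m p.
Proof. by rewrite /OPT; elim/big_rec: _ => // f x _ x_ge0; rewrite le_max x_ge0 orbT. Qed.

Lemma proper_scale_bounds (x K D : R) : 0 <= x ->
  1 <= x ^+ 4 - K -> x ^+ 4 - x ^+ 3 / 50 < K -> D < 2 * (x ^+ 4 - K) ->
  9 <= x ^+ 2 /\ D < x ^+ 4 / 25.
Proof.
move=> x_ge0 E_ge1 K_gt D_lt.
have x3_gt : 50 < x ^+ 3 by lra.
have x_ge3 : 3 <= x.
  rewrite leNgt; apply/negP => x_lt3.
  have : x ^+ 3 <= 3 ^+ 3 by rewrite lerXn2r ?nnegrE // ltW.
  lra.
split; first by rewrite expr2; nra.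
have : x ^+ 3 <= x ^+ 4 by rewrite ler_eXn2l //; lra.
lra.
Qed.

Lemma coin_prob_arith (D y s : R) : 1 <= D -> 9 <= y -> s <= 8 * D * y ->
  0 <= (9 * D * y)^-1 <= 1 /\ (9 * D * y)^-1 * s <= 8 / 9.
Proof.
move=> D_ge1 y_ge9 s_le.
have Dy_ge9 : 9 <= D * y by have := ler_wpM2r (le_trans (ler0n R 9) y_ge9) D_ge1; lra.
have Dy9_gt0 : 0 < 9 * D * y by rewrite -mulrA; lra.
rewrite invr_ge0 ltW // invf_le1 -?mulrA; last lra.
split; first lra.
by rewrite mulrC ler_pdivrMr //; lra.
Qed.

Lemma threshold_gap_arith (y D K s N : R) :
  9 <= y -> 1 <= D -> D < y ^+ 2 / 25 -> K + 1 <= y ^+ 2 -> 8 * D * y < s + 1 ->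
  N + s = K \/ N = 0 -> y / 2 - 1 / 8 <= (y ^+ 2 - D) / 8 - y / 2 - N / 8.
Proof.
move=> y_ge9 D_ge1 D_lt K_lt s_gt [N_eq | ->].
  by have := ler_wpM2r (_ : 0 <= 8 * y - 1) D_ge1; lra.
have : 9 * y <= y ^+ 2 by rewrite expr2 ler_wpM2r //; lra.
lra.
Qed.

Lemma chebyshev_margin_arith (y N g : R) :
  9 <= y -> N <= y ^+ 2 -> y / 2 - 1 / 8 <= g -> 0 < g /\ N / 8 <= 3 / 5 * g ^+ 2.
Proof.
move=> y_ge9 N_le g_ge; split; first lra.
have : (y / 2 - 1 / 8) ^+ 2 <= g ^+ 2 by rewrite ler_sqr ?nnegrE //; lra.
have : 9 * y <= y ^+ 2 by rewrite expr2 ler_wpM2r //; lra.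
rewrite !expr2; nra.
Qed.

Lemma good_fraction_arith (F G B : R) : 0 < F -> G + B = F -> B <= 3 / 5 * F ->
  1 / 25 <= F^-1 * (G / 9).
Proof. by move=> F_gt0 GB_eq B_le; rewrite ler_pdivlMl //; lra. Qed.

Lemma fourth_root_sqr (a : R) : 0 <= a ->
  fourth_root a ^+ 2 = Num.sqrt a /\ fourth_root a ^+ 4 = a.
Proof.
move=> a_ge0; have sqrt_sqr : fourth_root a ^+ 2 = Num.sqrt a by rewrite sqr_sqrtr ?sqrtr_ge0.
by split=> //; rewrite (exprM _ 2 2) sqrt_sqr sqr_sqrtr.
Qed.

(** * Proper inputs *)

Section ProperInput.
Variables (m n : nat) (p : 'I_n -> R).
Hypothesis p_ge0 : forall j, 0 <= p j.
Hypothesis proper : proper_input m p.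
Hypothesis n_div8 : (8 %| n)%N.

Local Notation large := (is_large m p).
Local Notation K := (num_large m p).
Local Notation d := (degree m p).
Local Notation D := (2 ^ degree m p)%N.
Local Notation x := (fourth_root m%:R).

Lemma large_gt_small j j' : large j -> ~~ large j' -> p j' < p j.
Proof. by rewrite /is_large -leNgt => j_large j'_small; apply: le_lt_trans j_large. Qed.

Lemma large_gt0 j : large j -> 0 < p j.
Proof. by apply: le_lt_trans; rewrite divr_ge0 ?OPT_ge0 ?mulr_ge0 ?sqrtr_ge0. Qed.

Lemma proper_input_bounds :
  [/\ (m <= n)%N, (K < m)%N & m%:R - pow34 m%:R / 50 < K%:R].
Proof.
by move: proper; rewrite /proper_input /simple_input !negb_or -leqNgt -ltnNge -ltNge => /and3P.
Qed.

Lemma degree_bounds : (m - K <= D)%N /\ (D < (m - K).*2)%N.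
Proof. by apply/andP/up_log2_bounds; rewrite subn_gt0; case: proper_input_bounds. Qed.

Lemma scale_bounds : 9 <= x ^+ 2 /\ D%:R < m%:R / 25 :> R.
Proof.
have [_ K_lt K_gt] := proper_input_bounds; have [_ D_lt] := degree_bounds.
have [x_sqr x_4] := fourth_root_sqr (ler0n R m).
have E_eq : (m - K)%N%:R = m%:R - K%:R :> R by rewrite natrB // ltnW.
have := @proper_scale_bounds x K%:R D%:R (sqrtr_ge0 _); rewrite x_4; apply.
- by rewrite -E_eq ler1n subn_gt0.
- by rewrite (_ : x ^+ 3 = pow34 m%:R) // /pow34 -x_sqr exprSr.
- by rewrite -E_eq -natrM ltr_nat mul2n.
Qed.

Lemma D_lt_m : (D < m)%N.
Proof.
have [_ D_lt] := scale_bounds; rewrite -(ltr_nat R); apply: lt_le_trans D_lt _.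
by rewrite ler_pdivrMr // ler_peMr // ler1n.
Qed.

Lemma m_gt25 : (25 < m)%N.
Proof.
have [_] := scale_bounds; rewrite -(ltr_nat R) ltr_pdivlMr //; apply: le_lt_trans.
by rewrite ler_peMl // ler1n expn_gt0.
Qed.

Lemma n_gt25 : (25 < n)%N.
Proof. by have [m_le_n _ _] := proper_input_bounds; apply: leq_trans m_gt25 m_le_n. Qed.

Lemma threshold_rankE : threshold_rank m d = (m%:R - D%:R) / 8 - x ^+ 2 / 2.
Proof.
by rewrite /threshold_rank natrB ?(ltnW D_lt_m) // (fourth_root_sqr (ler0n R m)).1.
Qed.

Lemma coin_probE : coin_prob m d = (9 * D%:R * x ^+ 2)^-1.
Proof. by rewrite /coin_prob natrM div1r (fourth_root_sqr (ler0n R m)).1. Qed.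

Local Notation s := (Num.truncn (8 * D%:R * x ^+ 2)).

Lemma sample_size_bounds : s%:R <= 8 * D%:R * x ^+ 2 < s%:R + 1.
Proof. by rewrite natr1 truncn_itv // mulr_ge0 ?sqr_ge0 // mulr_ge0. Qed.

Lemma coin_prob_bounds : 0 <= coin_prob m d <= 1 /\ coin_prob m d * s%:R <= 8 / 9.
Proof.
rewrite coin_probE; apply: coin_prob_arith; first by rewrite ler1n expn_gt0.
  exact: scale_bounds.1.
by case/andP: sample_size_bounds.
Qed.

Local Notation N := (K - s)%N.

Lemma threshold_margin : 0 < threshold_rank m d - N%:R / 8 /\
  N%:R / 8 <= 3 / 5 * (threshold_rank m d - N%:R / 8) ^+ 2.
Proof.
have [y_ge9 D_lt] := scale_bounds; have [_ K_lt _] := proper_input_bounds.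
have M_eq : m%:R = (x ^+ 2) ^+ 2 by rewrite -exprM (fourth_root_sqr (ler0n R m)).2.
have [_ s_gt] := andP sample_size_bounds.
have gap : x ^+ 2 / 2 - 1 / 8 <= threshold_rank m d - N%:R / 8.
  have := @threshold_gap_arith (x ^+ 2) D%:R K%:R s%:R N%:R.
  rewrite threshold_rankE -M_eq; apply=> //.
  - by rewrite ler1n expn_gt0.
  - by rewrite natr1 ler_nat.
  - have [s_le | K_lt_s] := leqP s K; [left | right].
      by rewrite -natrD subnK.
    by rewrite (_ : N = 0)%N //; apply/eqP; rewrite subn_eq0 ltnW.
have N_le : N%:R <= (x ^+ 2) ^+ 2.
  by rewrite -M_eq ler_nat (leq_trans (leq_subr _ _) (ltnW K_lt)).
exact: chebyshev_margin_arith y_ge9 N_le gap.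
Qed.

Local Notation S := (sample_times n).
Local Notation r := (threshold_rank m d).
Local Notation q := (coin_prob m d).

Section TopLargeJobs.
Variable T : {set 'I_n}.
Hypothesis T_large : T \subset [set j | large j].
Hypothesis card_T : #|T| = N.
Hypothesis T_top : {in T & [set j | large j] :\: T, forall j j', p j' <= p j}.

Lemma card_risky_le (sigma : {perm 'I_n}) :
  (hits S T sigma)%:R < r -> (#|risky_times m p d sigma| <= s)%N.
Proof.
move=> hits_lt.
have risky_sub : sigma @: risky_times m p d sigma \subset [set j | large j] :\: T.
  apply/subsetP => _ /imsetP[t + ->]; rewrite !inE => /and3P[_ large_t below_up].
  rewrite large_t andbT; apply: contraTN below_up => t_in_T; rewrite -leNgt.
  apply: (P_up_le (p_ge0 _)) hits_lt => j j_notin_T.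
  have [large_j | small_j] := boolP (large j).
    by apply: T_top; rewrite // !inE j_notin_T.
  exact/ltW/large_gt_small.
have := subset_leq_card risky_sub; rewrite card_imset; last exact: perm_inj.
rewrite cardsD (setIidPr T_large) card_T => /leq_trans; apply.
by rewrite leq_subLR addnC -leq_subLR.
Qed.

Lemma good_order_weight (sigma : {perm 'I_n}) :
  (hits S T sigma)%:R < r -> 1 / 9 <= (1 - q) ^+ #|risky_times m p d sigma|.
Proof.
move=> /card_risky_le; rewrite -(ler_nat R) => risky_le.
have [q01 qs_le] := coin_prob_bounds; apply: le_trans (bernoulli_ineq _ q01).
have : #|risky_times m p d sigma|%:R * q <= 8 / 9.
  apply: le_trans qs_le; rewrite mulrC ler_wpM2l //; by case/andP: q01.
move: (_ * q) => a; lra.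
Qed.

Lemma mean_hits : #|S|%:R * #|T|%:R / #|'I_n|%:R = N%:R / 8 :> R.
Proof.
have n8_gt0 : (0 < n %/ 8)%N by rewrite divn_gt0 // ltnW // (leq_trans _ n_gt25).
have n_eq : n%:R = 8 * (n %/ 8)%:R :> R by rewrite -natrM mulnC divnK.
have : (n %/ 8)%:R != 0 :> R by rewrite pnatr_eq0 -lt0n.
rewrite card_ord_lt ?leq_div // card_T card_ord n_eq.
by move: (n %/ 8)%:R => k k_neq0; field.
Qed.

Lemma bad_orders_few :
  #|[set sigma : {perm 'I_n} | r <= (hits S T sigma)%:R]|%:R <= 3 / 5 * (n`!)%:R :> R.
Proof.
have [g_pos N_sq] := threshold_margin.
have n_gt1 : (1 < #|'I_n|)%N by rewrite card_ord (ltn_trans _ n_gt25).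
have mu_lt : #|S|%:R * #|T|%:R / #|'I_n|%:R < r by rewrite mean_hits -subr_gt0.
have := le_trans (chebyshev_card _ (ltW mu_lt)) (sum_hits_centered_sqr_le n_gt1 S T).
rewrite mean_hits card_Sn => cheb; rewrite -(ler_pM2r (exprn_gt0 2 g_pos)).
by apply: le_trans cheb _; rewrite [leRHS]mulrAC [leRHS]mulrC ler_wpM2l.
Qed.

Lemma Pr_large_on_large_ge_top : 1 / 25 <= Pr m d (large_jobs_on_large_machines m p d).
Proof.
have [q01 _] := coin_prob_bounds; have [_ q_le1] := andP q01.
have large_i0 : large_machine d (Ordinal D_lt_m) by rewrite /large_machine.
have tails_placed sigma (coins : {ffun 'I_n -> bool}) :
    [forall t in risky_times m p d sigma, ~~ coins t] ->
    large_jobs_on_large_machines m p d (sigma, coins).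
  move=> tails; apply: run_A_large_placed tails _ large_i0.
    exact: large_gt_small.
  exact: large_gt0.
apply: le_trans (Pr_ge_tails_on q01 tails_placed).
set good := [set sigma : {perm 'I_n} | (hits S T sigma)%:R < r].
have good_le : #|good|%:R / 9 <= \sum_sigma (1 - q) ^+ #|risky_times m p d sigma|.
  have -> : #|good|%:R / 9 = \sum_(sigma in good) (1 / 9 : R).
    by rewrite sumr_const -[RHS]mulr_natr mul1r mulrC.
  rewrite [leRHS](bigID [in good]) /= -[leLHS]addr0 lerD //.
    by apply: ler_sum => sigma; rewrite inE => /good_order_weight.
  by apply: sumr_ge0 => sigma _; rewrite exprn_ge0 // subr_ge0.
apply: le_trans (ler_wpM2l _ good_le); last by rewrite invr_ge0 ler0n.
apply: good_fraction_arith bad_orders_few; first by rewrite ltr0n fact_gt0.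
rewrite -natrD -card_Sn -(cardsC good); congr (_ + _)%:R.
by apply: eq_card => sigma; rewrite !inE -leNgt.
Qed.

End TopLargeJobs.

Lemma Pr_large_on_large_ge : 1 / 25 <= Pr m d (large_jobs_on_large_machines m p d).
Proof.
have N_le : (N <= #|[set j | large j]|)%N by apply: leq_subr.
have [T [T_large card_T T_top]] := exists_top_subset p N_le.
exact: Pr_large_on_large_ge_top T_large card_T T_top.
Qed.

End ProperInput.

Theorem lemma8 :
  exists c : R, 0 < c /\
  forall (m n : nat) (p : 'I_n -> R),
    (forall j, 0 <= p j) ->
    proper_input m p ->
    (8 %| n)%N ->
    c <= Pr m (degree m p) (large_jobs_on_large_machines m p (degree m p)).
Proof.
exists (1 / 25); split=> [|m n p p_ge0 proper n_div8]; first by rewrite divr_gt0.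
exact: Pr_large_on_large_ge.
Qed.
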